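(* Suppose $m=1$. Then for every $\ell\in\{1,\dots,D\}$ the family $(\beta_{Q,\ell})_{Q\in\mathcal Q}$ is ultimately constant.
   Context: Let $(K,v)$ be a valued field, $\Gamma$ the divisible hull of $vK$, embedded in a divisible ordered abelian group $\Lambda$. Let $\nu\colon K[x]\to\Lambda\cup\{\infty\}$ be a valuation extending $v$ which is well-specified, i.e. it is not the case that simultaneously $\nu^{-1}(\infty)=0$, the value group of $\nu$ modulo $\Gamma$ is torsion, and the residue field of $\nu$ is algebraic over that of $v$. For $s\ge0$ let $\partial_s$ be the $s$-th Hasse–Schmidt derivative, defined by $f(x+y)=\sum_{s\ge0}(\partial_sf)y^s$. For nonconstant $f$ with $\nu(f)<\infty$ the level is $\epsilon_\nu(f)=\max\{(\nu(f)-\nu(\partial_sf))/s: s\ge1\}$; $\epsilon_\nu(a)=-\infty$ for $a\in K$. A monic $Q\in K[x]$ is a key polynomial for $\nu$ if $\epsilon_\nu(f)<\epsilon_\nu(Q)$ whenever $\deg f<\deg Q$. For monic $Q$, each $f$ has a unique $Q$-expansion $f=\sum_{i\ge0}f_{Q,i}Q^i$ with $\deg f_{Q,i}<\deg Q$; set $\nu_Q(f)=\min_i\nu(f_{Q,i}Q^i)$. Fix $m\ge1$ such that the set $\Psi_m$ of key polynomials of degree $m$ for $\nu$ is nonempty and has no element of maximal $\nu$-value. Let $\mathcal Q\subseteq\Psi_m$ be well-ordered by $Q<R\iff\nu(Q)<\nu(R)$ and cofinal in $\Psi_m$ for $\nu$-values. A family indexed by $\mathcal Q$ is ultimately constant if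 it is constant on a final segment of $\mathcal Q$. $f$ is $\mathcal Q$-stable if $\nu_Q(f)=\nu(f)$ for all $Q$ in a final segment of $\mathcal Q$, $\mathcal Q$-unstable otherwise. Assume unstable polynomials exist; limit key polynomials are the monic $\mathcal Q$-unstable polynomials of minimal degree, forming $\mathrm{KP}_\infty(\mathcal Q)$. Fix $F\in\mathrm{KP}_\infty(\mathcal Q)$, $D=\lfloor\deg F/m\rfloor$, $F=\sum_{\ell=0}^DF_{Q,\ell}Q^\ell$ its $Q$-expansion and $\beta_{Q,\ell}=\nu(F_{Q,\ell})\in\Lambda\cup\{\infty\}$. *)

From HB Require Import structures.
From mathcomp Require Import all_boot all_order all_algebra.
Set Implicit Arguments. Unset Strict Implicit. Unset Printing Implicit Defensive.
Import Order.TTheory GRing.Theory Num.Theory.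
Local Open Scope ring_scope.

(* The value group Λ : a divisible ordered abelian group.  A divisible      *)
(* (torsion-free) abelian group is the same as a Q-vector space, so Λ is    *)
(* given as an [lmodType rat] together with a total order [le] compatible  *)
(* with addition.                                                          *)
Record ordered_group (L : zmodType) (le : rel L) : Prop := {
  og_refl : reflexive le;
  og_anti : antisymmetric le;
  og_trans : transitive le;
  og_total : total le;
  og_add : forall x y z, le x y -> le (x + z) (y + z) }.

(* Λ ∪ {∞} is [option L], with [None] = ∞. *)
Section Ext.
Variables (L : zmodType) (le : rel L).
Definition vle (a b : option L) : bool :=
  match a, b with
  | _, None => true
  | None, Some _ => false
  | Some x, Some y => le x y
  end.
Definition vlt (a b : option L) : bool := vle a b && ~~ vle b a.
Definition vadd (a b : option L) : option L :=
  match a, b with Some x, Some y => Some (x + y) | _, _ => None end.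
Definition vmin (a b : option L) : option L := if vle a b then a else b.
End Ext.

Record field_valuation (K : fieldType) (L : zmodType) (le : rel L)
    (v : K -> option L) : Prop := {
  fv_inf : forall a, v a = None <-> a = 0;
  fv_mul : forall a b, v (a * b) = vadd (v a) (v b);
  fv_add : forall a b, vle le (vmin le (v a) (v b)) (v (a + b)) }.

(* A valuation nu : K[x] -> Λ ∪ {∞} (its support nu^{-1}(∞) may be a      *)
(* nonzero prime ideal). *)
Record poly_valuation (K : fieldType) (L : zmodType) (le : rel L)
    (nu : {poly K} -> option L) : Prop := {
  pv_zero : nu 0 = None;
  pv_one : nu 1 = Some 0;
  pv_mul : forall f g, nu (f * g) = vadd (nu f) (nu g);
  pv_add : forall f g, vle le (vmin le (nu f) (nu g)) (nu (f + g)) }.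

Section KeyPolys.
Variables (L : lmodType rat) (le : rel L) (K : fieldType).
Variables (v : K -> option L) (nu : {poly K} -> option L).

Definition Gamma (g : L) : Prop :=
  exists n : nat, (0 < n)%N /\ exists a : K, v a = Some (g *+ n).

(* The value group of nu (on K(x)) modulo Γ is torsion. *)
Definition value_group_torsion_mod_Gamma : Prop :=
  forall (f g : {poly K}) (a b : L), nu f = Some a -> nu g = Some b ->
    exists n : nat, (0 < n)%N /\ Gamma ((a - b) *+ n).

(* The residue field of nu (on K(x)) is algebraic over that of v: every     *)
(* residue class of f/g (nu f >= nu g) is a root of a polynomial over kv    *)
(* with nonzero (unit) leading coefficient, i.e. there are a_0..a_n in the  *)
(* valuation ring of v, a_n a unit, with nu(sum a_i (f/g)^i) > 0.           *)
Definition residue_field_algebraic : Prop :=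
  forall f g : {poly K}, g != 0 -> vle le (nu g) (nu f) ->
    exists (n : nat) (a : nat -> K),
      (forall i, (i <= n)%N -> vle le (Some 0) (v (a i))) /\
      v (a n) = Some 0 /\
      vlt le (nu (g ^+ n))
             (nu (\sum_(i < n.+1) a i *: (f ^+ i * g ^+ (n - i)))).

Definition well_specified : Prop :=
  ~ [/\ (forall f, nu f = None -> f = 0),
        value_group_torsion_mod_Gamma & residue_field_algebraic].

(* Hasse--Schmidt derivatives: f(x+y) = sum_s (hasse s f) y^s.  This is     *)
(* MathComp's [nderivn] (the n-th derivative divided by n!). *)
Definition hasse (s : nat) (f : {poly K}) : {poly K} := nderivn s f.

Inductive lvl := LMinf | LFin of L | LPinf.
Definition lvl_le (a b : lvl) : bool :=
  match a, b with
  | LMinf, _ => true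
  | _, LPinf => true
  | LFin x, LFin y => le x y
  | _, _ => false
  end.
Definition lvl_lt (a b : lvl) : bool := lvl_le a b && ~~ lvl_le b a.
Definition lvl_max (a b : lvl) : lvl := if lvl_le a b then b else a.

(* epsilon_nu(f) = max_{s >= 1} (nu f - nu (hasse s f)) / s ; terms with    *)
(* nu(hasse s f) = ∞ contribute -∞ (only s <= deg f can contribute);        *)
(* constants have level -∞; convention: +∞ if f nonconstant with nu f = ∞.  *)
Definition level (f : {poly K}) : lvl :=
  if (size f <= 1)%N then LMinf else
  match nu f with
  | None => LPinf
  | Some a =>
      \big[lvl_max/LMinf]_(1 <= s < size f)
        match nu (hasse s f) with
        | None => LMinf
        | Some b => LFin ((s%:R)^-1 *: (a - b))
        end
  end.

Definition key_poly (Q : {poly K}) : Prop :=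
  Q \is monic /\
  forall f : {poly K}, (size f < size Q)%N -> lvl_lt (level f) (level Q).

(* Q-expansion: f = sum_i expcoef Q f i * Q^i with deg (expcoef Q f i) < deg Q. *)
Definition expcoef (Q f : {poly K}) (i : nat) : {poly K} := (f %/ Q ^+ i) %% Q.

(* nu_Q(f) = min_i nu(f_{Q,i} Q^i) (the coefficients vanish for i >= size f). *)
Definition nuQ (Q f : {poly K}) : option L :=
  \big[vmin le/None]_(i < size f) nu (expcoef Q f i * Q ^+ i).

Definition Psi (m : nat) (Q : {poly K}) : Prop := key_poly Q /\ (size Q).-1 = m.

Definition well_ordered_by_value (Qset : {poly K} -> Prop) : Prop :=
  (forall Q R, Qset Q -> Qset R -> nu Q = nu R -> Q = R) /\
  (forall S : {poly K} -> Prop, (forall Q, S Q -> Qset Q) -> (exists Q, S Q) ->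
     exists Q0, S Q0 /\ forall Q, S Q -> vle le (nu Q0) (nu Q)).

Definition stable (Qset : {poly K} -> Prop) (f : {poly K}) : Prop :=
  exists Q0, Qset Q0 /\
    forall Q, Qset Q -> vle le (nu Q0) (nu Q) -> nuQ Q f = nu f.

Definition limit_key (Qset : {poly K} -> Prop) (F : {poly K}) : Prop :=
  [/\ F \is monic, ~ stable Qset F &
      forall g : {poly K}, g \is monic -> ~ stable Qset g -> (size F <= size g)%N].

End KeyPolys.

(* For m = 1 the key polynomials in 𝒬 are the X - a, and the ℓ-th coefficient of the
   (X - a)-expansion of F is the constant (∂_ℓ F)(a).  As deg ∂_ℓ F < deg F, the polynomial
   ∂_ℓ F is a scalar multiple of a 𝒬-stable monic g, so it suffices that v (g(b)) = ν(g) for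
   all X - b in 𝒬 beyond the stability point of g.  Take X - a below X - b, both beyond it.
   The (X - a)-expansion of g has value ν(g), i.e. its Taylor coefficients at a have
   ν(X - a)-weighted value ≥ ν(g); the Taylor shift from a to b preserves this because
   v(b - a) ≥ ν(X - a).  With the strictly larger weight ν(X - b) every non-constant
   monomial then exceeds ν(g), so the (X - b)-expansion attains its value ν(g) only at
   the constant term g(b).  Well-specification, the well-ordering of 𝒬 and the existence
   of unstable polynomials are not needed in this case. *)

From mathcomp Require Import all_boot all_order all_algebra.
From Stdlib Require Import Classical_Prop.
Set Implicit Arguments. Unset Strict Implicit. Unset Printing Implicit Defensive.
Import Order.TTheory GRing.Theory Num.Theory.
Local Open Scope ring_scope.

Section TaylorShift.
Variable K : fieldType.
Implicit Types (f Q : {poly K}) (a : K).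

Lemma coef0_comp_XaddC a f : (f \Po ('X + a%:P))`_0 = f.[a].
Proof. by rewrite -horner_coef0 horner_comp !hornerE. Qed.

Lemma coefS_comp_XaddC a f i :
  (f \Po ('X + a%:P))`_i.+1 = ((f %/ ('X - a%:P)) \Po ('X + a%:P))`_i.
Proof.
rewrite {1}(divp_eq f ('X - a%:P)) modp_XsubC comp_polyD comp_polyM comp_polyC.
rewrite comp_polyB comp_polyX comp_polyC addrK.
by rewrite coefD coefMX coefC addr0.
Qed.

Lemma expcoef_XsubC_comp a f i :
  expcoef ('X - a%:P) f i = ((f \Po ('X + a%:P))`_i)%:P.
Proof.
rewrite /expcoef; elim: i f => [|i IH] f.
  by rewrite expr0 divp1 modp_XsubC coef0_comp_XaddC.
by rewrite exprS -divp_divl IH coefS_comp_XaddC.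
Qed.

Lemma coef_comp_XaddC a f i : (f \Po ('X + a%:P))`_i = f^`N(i).[a].
Proof.
elim/poly_ind: f i => [|p c IH] i.
  by rewrite comp_poly0 coef0 nderivn_poly0 ?size_poly0 // horner0.
rewrite comp_polyD comp_polyM comp_polyX comp_polyC mulrDr !coefD coefMX coefMC coefC.
case: i => [|i] /=.
  by rewrite nderivn0 !hornerE IH nderivn0.
by rewrite nderivnMXaddC !hornerE !IH.
Qed.

Lemma expcoef_XsubC a f i : expcoef ('X - a%:P) f i = (f^`N(i).[a])%:P.
Proof. by rewrite expcoef_XsubC_comp coef_comp_XaddC. Qed.

Lemma size_nderivn_lt f i : (0 < i)%N -> (0 < size f)%N -> (size f^`N(i) < size f)%N.
Proof.
move=> i_gt0 f_gt0; apply: (@leq_ltn_trans (size f - i)%N).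
  by apply/leq_sizeP=> j; rewrite leq_subLR => le_j; rewrite coef_nderivn nth_default ?mul0rn.
by rewrite ltn_subrL i_gt0.
Qed.

Lemma monic_size2_XsubC Q : Q \is monic -> size Q = 2%N -> exists a, Q = 'X - a%:P.
Proof.
move=> /monicP lcQ sQ; exists (- Q`_0); apply/polyP=> j.
rewrite polyCN opprK coefD coefX coefC; case: j => [|[|j]] /=.
- by rewrite add0r.
- by rewrite addr0 -lcQ /lead_coef sQ.
- by rewrite addr0 nth_default // sQ.
Qed.

End TaylorShift.

Section OrderedGroup.
Variables (L : lmodType rat) (le : rel L).

Lemma natmulIr (x y : L) i : (0 < i)%N -> x *+ i = y *+ i -> x = y.
Proof.
move=> i_gt0 /eqP; rewrite -subr_eq0 -mulrnBl -scaler_nat scaler_eq0 pnatr_eq0.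
by rewrite eqn0Ngt i_gt0 subr_eq0 => /eqP.
Qed.

Lemma vlt_Some (x y : option L) : vlt le x y -> exists g, x = Some g.
Proof. by case: x => [g|]; [exists g | case: y]. Qed.

Lemma vmin_cases (x y : option L) : vmin le x y = x \/ vmin le x y = y.
Proof. by rewrite /vmin; case: ifP; auto. Qed.

Hypothesis Hog : ordered_group le.

Lemma og_le_trans x y z : le x y -> le y z -> le x z.
Proof. exact: og_trans. Qed.

Lemma og_lerD2r x y z : le (x + z) (y + z) = le x y.
Proof.
apply/idP/idP; last exact: og_add.
by move=> /(og_add Hog (- z)); rewrite !addrK.
Qed.

Lemma og_lerD2l x y z : le (z + x) (z + y) = le x y.
Proof. by rewrite ![z + _]addrC og_lerD2r. Qed.

Lemma og_lerD a b c d : le a b -> le c d -> le (a + c) (b + d).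
Proof.
by move=> le_ab le_cd; apply: (@og_le_trans _ (b + c)); rewrite ?og_lerD2r ?og_lerD2l.
Qed.

Lemma og_lerMn x y i : le x y -> le (x *+ i) (y *+ i).
Proof.
move=> le_xy; elim: i => [|i IH]; first by rewrite !mulr0n (og_refl Hog).
by rewrite !mulrS og_lerD.
Qed.

Lemma og_ltrMn x y i : (0 < i)%N -> le x y -> ~~ le y x -> ~~ le (y *+ i) (x *+ i).
Proof.
move=> i_gt0 le_xy lt_xy; apply: contra lt_xy => le_yx.
suff -> : y = x by exact: og_refl.
by apply: natmulIr i_gt0 _; apply: (og_anti Hog); rewrite le_yx og_lerMn.
Qed.

Implicit Types (x y z : option L).

Lemma vle_refl x : vle le x x.
Proof. by case: x => //= g; exact: og_refl. Qed.

Lemma vle_trans y x z : vle le x y -> vle le y z -> vle le x z.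
Proof. by case: x; case: y; case: z => //= ? ? ?; apply: og_le_trans. Qed.

Lemma vmin_l x y : vle le (vmin le x y) x.
Proof.
rewrite /vmin; case: ifP => [_|gt_xy]; first exact: vle_refl.
by case: x y gt_xy => [g|] [h|] //= /negbT gt_gh; have /orP[] := og_total Hog g h;
  rewrite ?(negbTE gt_gh).
Qed.

Lemma vmin_r x y : vle le (vmin le x y) y.
Proof. by rewrite /vmin; case: ifP => // _; exact: vle_refl. Qed.

Lemma vle_anti x y : vle le x y -> vle le y x -> x = y.
Proof.
by case: x; case: y => //= g h le_hg le_gh; congr Some; apply: (og_anti Hog); rewrite le_hg.
Qed.

Lemma vltW x y : vlt le x y -> vle le x y.
Proof. by case/andP. Qed.

Lemma vlt_le_trans y x z : vlt le x y -> vle le y z -> vlt le x z.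
Proof.
move=> /andP[le_xy gt_yx] le_yz; rewrite /vlt (vle_trans le_xy le_yz).
by apply: contra gt_yx => /(vle_trans le_yz).
Qed.

Lemma bigmin_le n (F : nat -> option L) j :
  (j < n)%N -> vle le (\big[vmin le/None]_(i < n) F i) (F j).
Proof.
elim: n F j => [|n IH] F [|j] //= lt_jn; rewrite big_ord_recl; first exact: vmin_l.
exact: vle_trans (vmin_r _ _) (IH (fun i => F i.+1) j lt_jn).
Qed.

Lemma bigmin_ind (P : option L -> Prop) n (F : 'I_n -> option L) :
  P None -> (forall i, P (F i)) -> P (\big[vmin le/None]_(i < n) F i).
Proof.
move=> P0 PF; apply: (big_ind P) => // x y Px Py.
by case: (vmin_cases x y) => ->.
Qed.

End OrderedGroup.

Section WeightedValuation.
Variables (L : lmodType rat) (le : rel L) (K : fieldType).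
Variables (v : K -> option L) (nu : {poly K} -> option L).
Hypotheses (Hog : ordered_group le) (Hv : field_valuation le v)
  (Hnu : poly_valuation le nu) (nu_polyC : forall a : K, nu a%:P = v a).
Implicit Types (f h : {poly K}) (a x y : K).

Lemma val0 : v 0 = None.
Proof. exact/(fv_inf Hv). Qed.

Lemma nu_opp f : nu (- f) = nu f.
Proof.
have nuN1 : nu (-1) = Some 0.
  have := pv_mul Hnu (-1) (-1); rewrite mulrNN mulr1 (pv_one Hnu).
  case: (nu (-1)) => [g|] //= [g2]; congr Some.
  by apply: (@natmulIr _ g 0 2) => //; rewrite mulr2n mul0rn.
by rewrite -mulN1r (pv_mul Hnu) nuN1; case: (nu f) => //= g; rewrite add0r.
Qed.

Lemma nu_exp Q g i : nu Q = Some g -> nu (Q ^+ i) = Some (g *+ i).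
Proof.
move=> nuQ; elim: i => [|i IH]; first by rewrite expr0 (pv_one Hnu) mulr0n.
by rewrite exprS (pv_mul Hnu) nuQ IH mulrS.
Qed.

(* [weighted_ge b g x i]: the monomial [x Q^i] has value at least [b] when [nu Q = g]. *)
Definition weighted_ge (b g : L) x (i : nat) : Prop :=
  forall r, v x = Some r -> le b (r + g *+ i).

Lemma weighted_ge0 b g i : weighted_ge b g 0 i.
Proof. by move=> r; rewrite val0. Qed.

Lemma weighted_geD b g x y i :
  weighted_ge b g x i -> weighted_ge b g y i -> weighted_ge b g (x + y) i.
Proof.
move=> ge_x ge_y r vxy; have := fv_add Hv x y; rewrite vxy.
have ge_r z : weighted_ge b g z i -> vle le (v z) (Some r) -> le b (r + g *+ i).
  case Ez: (v z) => [s|] // ge_z /= le_sr.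
  by apply: (og_le_trans Hog (ge_z s Ez)); rewrite og_lerD2r.
by case: (vmin_cases le (v x) (v y)) => ->; apply: ge_r.
Qed.

Lemma weighted_geM b g (c : K) y i : vle le (Some g) (v c) ->
  weighted_ge (b - g) g y i -> weighted_ge b g (c * y) i.
Proof.
move=> ge_c ge_y r; rewrite (fv_mul Hv).
case: (v c) ge_c => [s|] // le_gs; case Ey: (v y) => [t|] //= [<-].
have := og_lerD Hog le_gs (ge_y t Ey).
by rewrite addrCA subrr addr0 addrA.
Qed.

Lemma weighted_geS b g y i : weighted_ge b g y i.+1 <-> weighted_ge (b - g) g y i.
Proof.
split=> ge_y r /ge_y;
  by rewrite mulrS (addrC g) addrA -(og_lerD2r Hog (b - g) _ g) subrK.
Qed.

Lemma weighted_ge_comp_XaddC h (c : K) g b : vle le (Some g) (v c) ->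
  (forall i, weighted_ge b g h`_i i) ->
  forall i, weighted_ge b g (h \Po ('X + c%:P))`_i i.
Proof.
move=> ge_c; elim/poly_ind: h b => [|p k IH] b ge_h i.
  by rewrite comp_poly0 coef0; exact: weighted_ge0.
have ge_p : forall j, weighted_ge (b - g) g p`_j j.
  by move=> j; apply/weighted_geS; have := ge_h j.+1; rewrite coefD coefMX coefC addr0.
rewrite comp_polyD comp_polyM comp_polyX comp_polyC mulrDr !coefD coefMX coefMC coefC.
case: i => [|i] /=.
  rewrite add0r mulrC; apply: weighted_geD; first exact: weighted_geM ge_c (IH _ ge_p 0%N).
  by have := ge_h 0%N; rewrite coefD coefMX coefC add0r.
rewrite addr0 mulrC; apply: weighted_geD; first by apply/weighted_geS; exact: IH.
exact: weighted_geM ge_c (IH _ ge_p i.+1).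
Qed.

Lemma weighted_ge_ltS b g1 g2 x i : le g1 g2 -> ~~ le g2 g1 ->
  weighted_ge b g1 x i.+1 -> vlt le (Some b) (vadd (v x) (Some (g2 *+ i.+1))).
Proof.
move=> le12 lt12 ge_x; case Ex: (v x) => [r|] //=.
have le_b := ge_x r Ex.
have le_rg : le (r + g1 *+ i.+1) (r + g2 *+ i.+1) by rewrite og_lerD2l //; exact: og_lerMn.
rewrite /vlt /= (og_le_trans Hog le_b le_rg) /=.
apply: contra (og_ltrMn Hog (ltn0Sn i) le12 lt12) => le_rb.
by rewrite -(og_lerD2l Hog _ _ r); exact: (og_le_trans Hog le_rb le_b).
Qed.

Definition weighted_val (g : L) h : option L :=
  \big[vmin le/None]_(i < size h) vadd (v h`_i) (Some (g *+ i)).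

Lemma weighted_val_ge g h b : weighted_val g h = Some b -> forall i, weighted_ge b g h`_i i.
Proof.
move=> wh i r vr; case: (ltnP i (size h)) => [lt_ih|le_hi]; last first.
  by move: vr; rewrite nth_default ?val0.
by have := bigmin_le Hog (fun i => vadd (v h`_i) (Some (g *+ i))) lt_ih;
  rewrite -/(weighted_val g h) wh vr.
Qed.

Lemma weighted_val_le_coef0 g h : vle le (weighted_val g h) (v h`_0).
Proof.
case: (posnP (size h)) => [/eqP|h_gt0].
  by rewrite size_poly_eq0 => /eqP->; rewrite coef0 val0; case: (weighted_val _ _).
have := bigmin_le Hog (fun i => vadd (v h`_i) (Some (g *+ i))) h_gt0.
by rewrite -/(weighted_val g h) mulr0n; case: (v h`_0) => //= r; rewrite addr0.
Qed.

Lemma nuQ_XsubC a g f : nu ('X - a%:P) = Some g ->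
  nuQ le nu ('X - a%:P) f = weighted_val g (f \Po ('X + a%:P)).
Proof.
move=> nuXa; rewrite /weighted_val size_comp_poly2 ?size_XaddC //.
apply: eq_bigr => i _.
by rewrite expcoef_XsubC_comp (pv_mul Hnu) nu_polyC (nu_exp _ nuXa).
Qed.

Lemma eval_eq_nuQ_XsubC f a (b : K) g1 g2 c :
  nu ('X - a%:P) = Some g1 -> nu ('X - b%:P) = Some g2 -> vlt le (Some g1) (Some g2) ->
  nuQ le nu ('X - a%:P) f = c -> nuQ le nu ('X - b%:P) f = c -> v f.[b] = c.
Proof.
move=> nuXa nuXb /andP[/= le12 lt12] nuQa nuQb.
have le_eval := weighted_val_le_coef0 g2 (f \Po ('X + b%:P)).
rewrite -nuQ_XsubC // nuQb coef0_comp_XaddC in le_eval.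
case: c nuQa nuQb le_eval => [c|] nuQa nuQb le_eval; last by move: le_eval; case: (v f.[b]).
have ge_ba : vle le (Some g1) (v (b - a)).
  have := pv_add Hnu ('X - a%:P) (- ('X - b%:P)).
  by rewrite nu_opp nuXa nuXb addrC opprB addrA subrK -polyCB nu_polyC /vmin /= le12.
have ge_fb : forall i, weighted_ge c g1 (f \Po ('X + b%:P))`_i i.
  have -> : 'X + b%:P = ('X + a%:P) \Po ('X + (b - a)%:P).
    by rewrite comp_polyD comp_polyX comp_polyC polyCB addrA addrNK.
  rewrite comp_polyA; apply: weighted_ge_comp_XaddC ge_ba _.
  by apply: weighted_val_ge; rewrite -nuQ_XsubC.
apply: (vle_anti Hog _ le_eval); apply: contraT => lt_c.
suff : vlt le (Some c) (nuQ le nu ('X - b%:P) f) by rewrite nuQb /vlt /= (og_refl Hog).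
rewrite (nuQ_XsubC _ nuXb); apply: (@bigmin_ind _ le (vlt le (Some c))) => // -[[|i] _] /=.
  rewrite coef0_comp_XaddC mulr0n /vlt.
  by case: (v f.[b]) le_eval lt_c => //= r le_cr lt_rc; rewrite addr0 le_cr.
exact: weighted_ge_ltS le12 lt12 (ge_fb i.+1).
Qed.

End WeightedValuation.

Section DegreeOneKeyPolys.
Variables (L : lmodType rat) (le : rel L) (K : fieldType).
Variables (v : K -> option L) (nu : {poly K} -> option L) (Qset : {poly K} -> Prop).
Hypotheses (Hog : ordered_group le) (Hv : field_valuation le v)
  (Hnu : poly_valuation le nu) (nu_polyC : forall a : K, nu a%:P = v a).
Implicit Types (F f g Q R : {poly K}) (a : K).
Hypothesis Qset_Psi1 : forall Q, Qset Q -> Psi le nu 1 Q.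
Hypothesis Psi1_nomax :
  forall Q, Psi le nu 1 Q -> exists R, Psi le nu 1 R /\ vlt le (nu Q) (nu R).
Hypothesis Qset_cofinal :
  forall Q, Psi le nu 1 Q -> exists R, Qset R /\ vle le (nu Q) (nu R).

Lemma Qset_XsubC Q : Qset Q -> exists a, Q = 'X - a%:P.
Proof.
move=> /Qset_Psi1 [[monQ _] sQ]; apply: monic_size2_XsubC => //.
by rewrite (polySpred (monic_neq0 monQ)) sQ.
Qed.

Lemma Qset_above Q : Qset Q -> exists R, Qset R /\ vlt le (nu Q) (nu R).
Proof.
move=> /Qset_Psi1 /Psi1_nomax [R' [/Qset_cofinal [R [QR le_R'R]] lt_QR']].
by exists R; split; last exact: (vlt_le_trans Hog lt_QR' le_R'R).
Qed.

Lemma Qset_value_finite Q : Qset Q -> exists x : L, nu Q = Some x.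
Proof. by case/Qset_above=> R [_ /vlt_Some]. Qed.

Lemma stable_evalE g : stable le nu Qset g ->
  exists Q0, Qset Q0 /\ forall a, Qset ('X - a%:P) -> vle le (nu Q0) (nu ('X - a%:P)) ->
    v g.[a] = nu g.
Proof.
case=> Q1 [Q1set stQ1]; have [Q0 [Q0set lt_Q10]] := Qset_above Q1set.
exists Q0; split=> // b Xb_set le_Q0b.
have lt_Q1b := vlt_le_trans Hog lt_Q10 le_Q0b.
have [a eQ1] := Qset_XsubC Q1set; subst Q1.
have [g1 nuXa] := Qset_value_finite Q1set; have [g2 nuXb] := Qset_value_finite Xb_set.
rewrite nuXa nuXb in lt_Q1b.
apply: (eval_eq_nuQ_XsubC Hog Hv Hnu nu_polyC nuXa nuXb lt_Q1b); apply: stQ1 => //.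
  exact: vle_refl.
by rewrite nuXa nuXb vltW.
Qed.

Lemma eval_eventually_constant F f : (exists Q, Qset Q) -> limit_key le nu Qset F ->
  (size f < size F)%N ->
  exists Q0 c, Qset Q0 /\ forall a, Qset ('X - a%:P) -> vle le (nu Q0) (nu ('X - a%:P)) ->
    v f.[a] = c.
Proof.
move=> [Q Qset_Q] [_ _ minF] lt_fF; have [->|f_neq0] := eqVneq f 0.
  by exists Q, (v 0); split=> // a _ _; rewrite horner0.
pose g := (lead_coef f)^-1 *: f.
have lcf_neq0 : lead_coef f != 0 by rewrite lead_coef_eq0.
have g_monic : g \is monic by apply/monicP; rewrite lead_coefZ mulVf.
have fE : f = lead_coef f *: g by rewrite scalerA divff // scale1r.
have g_stable : stable le nu Qset g.
  apply: NNPP => /(minF g g_monic); rewrite size_scale ?invr_neq0 //.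
  by rewrite leqNgt lt_fF.
have [Q0 [Q0set evalg]] := stable_evalE g_stable.
exists Q0, (vadd (v (lead_coef f)) (nu g)); split=> // a Xa_set le_Q0a.
by rewrite {1}fE hornerZ (fv_mul Hv) evalg.
Qed.

End DegreeOneKeyPolys.

Theorem mainTheorem17 (L : lmodType rat) (le : rel L) (K : fieldType)
    (v : K -> option L) (nu : {poly K} -> option L) (m : nat)
    (Qset : {poly K} -> Prop) (F : {poly K}) :
  ordered_group le ->
  field_valuation le v ->
  poly_valuation le nu ->
  (forall a : K, nu a%:P = v a) ->
  well_specified le v nu ->
  (1 <= m)%N ->
  (exists Q, Psi le nu m Q) ->
  (forall Q, Psi le nu m Q -> exists R, Psi le nu m R /\ vlt le (nu Q) (nu R)) ->
  (forall Q, Qset Q -> Psi le nu m Q) ->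
  well_ordered_by_value le nu Qset ->
  (forall Q, Psi le nu m Q -> exists R, Qset R /\ vle le (nu Q) (nu R)) ->
  (exists f, ~ stable le nu Qset f) ->
  limit_key le nu Qset F ->
  m = 1%N ->
  forall l : nat, (1 <= l <= (size F).-1 %/ m)%N ->
  exists Q0, Qset Q0 /\
    forall Q R, Qset Q -> Qset R -> vle le (nu Q0) (nu Q) -> vle le (nu Q0) (nu R) ->
      nu (expcoef Q F l) = nu (expcoef R F l).
Proof.
move=> Hog Hv Hnu nu_polyC _ _ [Q1 Psi_Q1] nomax Qset_Psi _ cofinal _ limF m1 l /andP[l_gt0 _].
subst m.
have F_gt0 : (0 < size F)%N by case: limF => monF _ _; rewrite size_poly_gt0 monic_neq0.
have Qset_ne : exists Q, Qset Q by have [R [Qset_R _]] := cofinal Q1 Psi_Q1; exists R.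
have [Q0 [c [Q0set evalc]]] := eval_eventually_constant Hog Hv Hnu nu_polyC Qset_Psi nomax
  cofinal Qset_ne limF (size_nderivn_lt l_gt0 F_gt0).
exists Q0; split=> // Q R Qset_Q Qset_R le_Q0Q le_Q0R.
have [a eQ] := Qset_XsubC Qset_Psi Qset_Q; have [b eR] := Qset_XsubC Qset_Psi Qset_R.
by subst Q R; rewrite !expcoef_XsubC !nu_polyC !evalc.
Qed.
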